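(* Let $G$ be a finitely generated group containing an element of infinite order. For every generating $n$-tuple $S\in\Gamma_n(G)$ and every $m\ge n+2$, the graph $\Gamma_m(G,S)$ has exponential growth.
   Context: For a group $G$, a generating $n$-tuple is $(g_1,\dots,g_n)\in G^n$ with $G=\langle g_1,\dots,g_n\rangle$. The product replacement graph $\Gamma_n(G)$ has vertices the generating $n$-tuples, with edges from $(g_1,\dots,g_n)$ to each tuple obtained by replacing $g_j$ by $g_jg_i^{\pm1}$ or $g_i^{\pm1}g_j$, for every ordered pair $i\neq j$. For $S=(g_1,\dots,g_n)$ and $m\ge n$, $\Gamma_m(G,S)$ is the connected component of $\Gamma_m(G)$ containing $(g_1,\dots,g_n,1,\dots,1)$ ($m-n$ identity entries). A connected graph has exponential growth if for some vertex $v$ there is $\alpha>1$ such that the number of vertices at distance at most $r$ from $v$ is at least $\alpha^r$ for all sufficiently large $r$. *)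

From Stdlib Require Import Reals List Arith Lia.
Import ListNotations.
Set Implicit Arguments.

Record group := Group {
  carrier :> Type;
  gmul : carrier -> carrier -> carrier;
  gone : carrier;
  ginv : carrier -> carrier;
  gmulA : forall x y z, gmul x (gmul y z) = gmul (gmul x y) z;
  gmul1l : forall x, gmul gone x = x;
  gmulVl : forall x, gmul (ginv x) x = gone
}.

Section Defs.
Variable G : group.

Inductive generated (A : G -> Prop) : G -> Prop :=
| gen_one : generated A (gone G)
| gen_base : forall x, A x -> generated A x
| gen_mul : forall x y, generated A x -> generated A y -> generated A (gmul G x y)
| gen_inv : forall x, generated A x -> generated A (ginv G x).

Definition generates (t : list G) : Prop :=
  forall g : G, generated (fun x => In x t) g.

Definition generating_tuple (n : nat) (t : list G) : Prop :=
  length t = n /\ generates t.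

Definition finitely_generated : Prop := exists t : list G, generates t.

Fixpoint gpow (g : G) (k : nat) : G :=
  match k with O => gone G | S k' => gmul G g (gpow g k') end.

Definition infinite_order (g : G) : Prop :=
  forall k, 0 < k -> gpow g k <> gone G.

Definition replace_at (t : list G) (j : nat) (x : G) : list G :=
  firstn j t ++ x :: skipn (S j) t.

Definition nthG (t : list G) (i : nat) : G := nth i t (gone G).

Definition move (t u : list G) : Prop :=
  exists i j, i < length t /\ j < length t /\ i <> j /\
   (u = replace_at t j (gmul G (nthG t j) (nthG t i)) \/
    u = replace_at t j (gmul G (nthG t j) (ginv G (nthG t i))) \/
    u = replace_at t j (gmul G (nthG t i) (nthG t j)) \/
    u = replace_at t j (gmul G (ginv G (nthG t i)) (nthG t j))).

(* edges of the product replacement graph Gamma_m(G): both ends are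
   generating m-tuples and one is obtained from the other by a move *)
Definition pr_edge (m : nat) (t u : list G) : Prop :=
  generating_tuple m t /\ generating_tuple m u /\ move t u.

Inductive within (m : nat) : nat -> list G -> list G -> Prop :=
| within_refl : forall r t, within m r t t
| within_step : forall r t u w, pr_edge m t u -> within m r u w -> within m (S r) t w.

Definition connected_in (m : nat) (t u : list G) : Prop := exists r, within m r t u.

(* base vertex (g_1,...,g_n,1,...,1) of Gamma_m(G,S) *)
Definition pad (m : nat) (S : list G) : list G := S ++ repeat (gone G) (m - length S).

Definition pr_component_exp_growth (m : nat) (S : list G) : Prop :=
  exists v : list G,
    generating_tuple m (pad m S) /\ connected_in m (pad m S) v /\
    exists alpha : R, (1 < alpha)%R /\
      exists r0 : nat, forall r, r0 <= r ->
        exists l : list (list G),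
          NoDup l /\ (forall w, In w l -> within m r v w) /\
          (alpha ^ r <= INR (length l))%R.
End Defs.
Arguments infinite_order {G} g.
Arguments generating_tuple {G} n t.
Arguments pr_component_exp_growth {G} m S.

(* Put two fresh slots x, y next to the generating tuple S.  Right-multiplying a
   slot by the entries of S and their inverses moves it through the whole group,
   so the padded tuple (S, 1, 1, ...) is joined to (S, g, g, ...) for g of
   infinite order.  From (S, g^a, g^b, ...) the two moves x := x y and y := y x
   lead to (S, g^(a+b), g^b, ...) and (S, g^a, g^(a+b), ...); iterating them is
   the Calkin-Wilf tree, in which the 2^r words of length r reach 2^r distinct
   pairs (a, b).  Since g has infinite order, these are 2^r distinct vertices
   within distance r. *)

From Stdlib Require Import Reals List Lia Lra FinFun.
Import ListNotations.
Set Implicit Arguments.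

Section GroupFacts.
Variable G : group.

Lemma gmulVr (x : G) : gmul G x (ginv G x) = gone G.
Proof.
  transitivity (gmul G (gmul G (ginv G (ginv G x)) (ginv G x)) (gmul G x (ginv G x))).
  { rewrite gmulVl, gmul1l; reflexivity. }
  rewrite <- gmulA, (gmulA G (ginv G x) x (ginv G x)), gmulVl, gmul1l.
  apply gmulVl.
Qed.

Lemma gmul1r (x : G) : gmul G x (gone G) = x.
Proof. rewrite <- (gmulVl G x), gmulA, gmulVr, gmul1l; reflexivity. Qed.

Lemma ginvK (x : G) : ginv G (ginv G x) = x.
Proof.
  rewrite <- (gmul1r (ginv G (ginv G x))), <- (gmulVl G x), gmulA, gmulVl, gmul1l.
  reflexivity.
Qed.

Lemma ginv1 : ginv G (gone G) = gone G.
Proof. rewrite <- (gmul1r (ginv G (gone G))); apply gmulVl. Qed.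

Lemma ginvM (a b : G) : ginv G (gmul G a b) = gmul G (ginv G b) (ginv G a).
Proof.
  set (q := gmul G (ginv G b) (ginv G a)).
  assert (Hq : gmul G q (gmul G a b) = gone G).
  { unfold q. rewrite gmulA, <- (gmulA G (ginv G b)), gmulVl, gmul1r, gmulVl.
    reflexivity. }
  rewrite <- (gmul1r q), <- (gmulVr (gmul G a b)), gmulA, Hq, gmul1l; reflexivity.
Qed.

Lemma gmulI (x y z : G) : gmul G x y = gmul G x z -> y = z.
Proof.
  intro H.
  rewrite <- (gmul1l G y), <- (gmul1l G z), <- (gmulVl G x), <- !gmulA, H.
  reflexivity.
Qed.

Lemma gpowD (g : G) a b : gpow G g (a + b) = gmul G (gpow G g a) (gpow G g b).
Proof.
  induction a as [|a IH]; simpl.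
  - rewrite gmul1l; reflexivity.
  - rewrite IH, gmulA; reflexivity.
Qed.

Lemma gpow_inj (g : G) : infinite_order g -> Injective (gpow G g).
Proof.
  intros Hg.
  assert (Hlt : forall a b, a < b -> gpow G g a <> gpow G g b).
  { intros a b Hab E. replace b with (a + (b - a)) in E by lia.
    rewrite gpowD, <- (gmul1r (gpow G g a)) in E at 1.
    apply gmulI in E. apply (Hg (b - a)); [lia | symmetry; exact E]. }
  intros a b E. destruct (Nat.lt_trichotomy a b) as [H|[H|H]]; auto.
  - exfalso; exact (Hlt _ _ H E).
  - exfalso; exact (Hlt _ _ H (eq_sym E)).
Qed.

Lemma generated_mono (A B : G -> Prop) : (forall x, A x -> B x) ->
  forall g, generated G A g -> generated G B g.
Proof.
  intros HAB g H.
  induction H; [apply gen_one | apply gen_base | apply gen_mul | apply gen_inv]; auto.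
Qed.

End GroupFacts.

Section Paths.
Variables (G : group) (m : nat).

Lemma within_trans r1 t u : within G m r1 t u ->
  forall r2 w, within G m r2 u w -> within G m (r1 + r2) t w.
Proof.
  induction 1 as [r1 t|r1 t u v Htu _ IH]; intros r2 w Hw; simpl.
  - revert r1. induction Hw as [r t|r t u w' Htu _ IH]; intros r1.
    + apply within_refl.
    + rewrite Nat.add_succ_r. eapply within_step; eauto.
  - eapply within_step; eauto.
Qed.

Lemma within_snoc r t u w : within G m r t u -> pr_edge G m u w -> within G m (S r) t w.
Proof.
  intros H E. rewrite <- Nat.add_1_r. eapply within_trans; [exact H|].
  eapply within_step; [exact E | apply within_refl].
Qed.

Lemma connected_trans t u w :
  connected_in G m t u -> connected_in G m u w -> connected_in G m t w.
Proof. intros [r1 H1] [r2 H2]. exists (r1 + r2). eapply within_trans; eauto. Qed.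

Lemma connected_edge t u : pr_edge G m t u -> connected_in G m t u.
Proof. intros E. exists 1. eapply within_step; [exact E | apply within_refl]. Qed.

Lemma connected_mul_generated (A : list G) (T : G -> list G)
  (HT : forall z s, In s A ->
     pr_edge G m (T z) (T (gmul G z s)) /\
     pr_edge G m (T z) (T (gmul G z (ginv G s)))) :
  forall h, generated G (fun x => In x A) h -> forall z,
    connected_in G m (T z) (T (gmul G z h)) /\
    connected_in G m (T z) (T (gmul G z (ginv G h))).
Proof.
  induction 1 as [|s Hs|x y _ IHx _ IHy|x _ IHx]; intro z.
  - rewrite ginv1, gmul1r. split; exists 0; apply within_refl.
  - destruct (HT z s Hs). split; apply connected_edge; auto.
  - split.
    + rewrite gmulA.
      eapply connected_trans; [apply (proj1 (IHx z)) | apply (proj1 (IHy _))].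
    + rewrite ginvM, gmulA.
      eapply connected_trans; [apply (proj2 (IHy z)) | apply (proj2 (IHx _))].
  - rewrite ginvK. split; [apply (proj2 (IHx z)) | apply (proj1 (IHx z))].
Qed.

End Paths.

Section TwoSlots.
Variables (G : group) (n k : nat) (t : list G).
Hypothesis Ht : generating_tuple n t.

Definition slots (x y : G) : list G := t ++ x :: y :: repeat (gone G) k.

Lemma pad_slots : pad G (n + 2 + k) t = slots (gone G) (gone G).
Proof.
  destruct Ht as [HL _]. unfold pad, slots. rewrite HL.
  replace (n + 2 + k - n) with (S (S k)) by lia. reflexivity.
Qed.

Lemma slots_generating x y : generating_tuple (n + 2 + k) (slots x y).
Proof.
  destruct Ht as [HL Hgen]. split.
  - unfold slots. rewrite length_app, HL. simpl. rewrite repeat_length. lia.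
  - intro g. apply generated_mono with (2 := Hgen g).
    intros z Hz. apply in_or_app; auto.
Qed.

Lemma length_base : length t = n.
Proof. apply Ht. Qed.

Lemma nth_slots_x x y : nthG G (slots x y) n = x.
Proof.
  unfold nthG, slots. rewrite app_nth2 by (rewrite length_base; lia).
  rewrite length_base, Nat.sub_diag. reflexivity.
Qed.

Lemma nth_slots_y x y : nthG G (slots x y) (S n) = y.
Proof.
  unfold nthG, slots. rewrite app_nth2 by (rewrite length_base; lia).
  rewrite length_base. replace (S n - n) with 1 by lia. reflexivity.
Qed.

Lemma nth_slots_base x y i : i < n -> nthG G (slots x y) i = nth i t (gone G).
Proof. intro Hi. unfold nthG, slots. apply app_nth1. rewrite length_base; lia. Qed.

Lemma replace_slots_x x y z : replace_at G (slots x y) n z = slots z y.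
Proof.
  unfold replace_at, slots. rewrite <- length_base. clear Ht.
  induction t as [|a l IH]; simpl; [reflexivity | f_equal; exact IH].
Qed.

Lemma replace_slots_y x y z : replace_at G (slots x y) (S n) z = slots x z.
Proof.
  unfold replace_at, slots. rewrite <- length_base. clear Ht.
  induction t as [|a l IH]; simpl; [reflexivity | f_equal; exact IH].
Qed.

Lemma move_slots_edge x y x' y' :
  move G (slots x y) (slots x' y') -> pr_edge G (n + 2 + k) (slots x y) (slots x' y').
Proof. intro M. repeat split; try apply slots_generating; exact M. Qed.

Lemma length_slots x y : length (slots x y) = n + 2 + k.
Proof. apply slots_generating. Qed.

Lemma edge_slots_x_gen x y s : In s t ->
  pr_edge G (n + 2 + k) (slots x y) (slots (gmul G x s) y) /\
  pr_edge G (n + 2 + k) (slots x y) (slots (gmul G x (ginv G s)) y).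
Proof.
  intro Hs. destruct (In_nth t s (gone G) Hs) as [i [Hi <-]]. rewrite length_base in Hi.
  split; apply move_slots_edge; exists i, n; rewrite length_slots;
    (split; [lia | split; [lia | split; [lia |]]]);
    rewrite !replace_slots_x, nth_slots_x, nth_slots_base by lia; auto.
Qed.

Lemma edge_slots_y_gen x y s : In s t ->
  pr_edge G (n + 2 + k) (slots x y) (slots x (gmul G y s)) /\
  pr_edge G (n + 2 + k) (slots x y) (slots x (gmul G y (ginv G s))).
Proof.
  intro Hs. destruct (In_nth t s (gone G) Hs) as [i [Hi <-]]. rewrite length_base in Hi.
  split; apply move_slots_edge; exists i, (S n); rewrite length_slots;
    (split; [lia | split; [lia | split; [lia |]]]);
    rewrite !replace_slots_y, nth_slots_y, nth_slots_base by lia; auto.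
Qed.

Lemma edge_slots_xy x y :
  pr_edge G (n + 2 + k) (slots x y) (slots (gmul G x y) y).
Proof.
  apply move_slots_edge. exists (S n), n. rewrite length_slots.
  split; [lia | split; [lia | split; [lia |]]].
  rewrite replace_slots_x, nth_slots_x, nth_slots_y; auto.
Qed.

Lemma edge_slots_yx x y :
  pr_edge G (n + 2 + k) (slots x y) (slots x (gmul G y x)).
Proof.
  apply move_slots_edge. exists n, (S n). rewrite length_slots.
  split; [lia | split; [lia | split; [lia |]]].
  rewrite replace_slots_y, nth_slots_x, nth_slots_y; auto.
Qed.

Lemma connected_slots x y :
  connected_in G (n + 2 + k) (slots (gone G) (gone G)) (slots x y).
Proof.
  pose proof Ht as [_ Hgen].
  assert (Hx := connected_mul_generated t (fun z => slots z (gone G))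
                  (fun z s Hs => edge_slots_x_gen z (gone G) s Hs) (Hgen x) (gone G)).
  assert (Hy := connected_mul_generated t (fun z => slots x z)
                  (fun z s Hs => edge_slots_y_gen x z s Hs) (Hgen y) (gone G)).
  rewrite gmul1l in Hx, Hy.
  exact (connected_trans (proj1 Hx) (proj1 Hy)).
Qed.

Lemma slots_inj x y x' y' : slots x y = slots x' y' -> x = x' /\ y = y'.
Proof. unfold slots. intro E. apply app_inv_head in E. injection E. auto. Qed.

End TwoSlots.

Fixpoint cw_pair (w : list bool) : nat * nat :=
  match w with
  | [] => (1, 1)
  | b :: w' => let (a, c) := cw_pair w' in if b then (a + c, c) else (a, c + a)
  end.

Lemma cw_pair_pos w : 1 <= fst (cw_pair w) /\ 1 <= snd (cw_pair w).
Proof.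
  induction w as [|b w IH]; simpl; [lia|].
  destruct (cw_pair w) as [a c]; simpl in *. destruct b; simpl; lia.
Qed.

(* Both entries are positive, so the larger entry of [cw_pair (b :: w)]
   tells b, and subtracting the smaller one gives back [cw_pair w]. *)
Lemma cw_pair_inj w1 w2 :
  length w1 = length w2 -> cw_pair w1 = cw_pair w2 -> w1 = w2.
Proof.
  revert w2. induction w1 as [|b1 w1 IH]; intros [|b2 w2] HL E;
    simpl in *; try discriminate; auto.
  pose proof (cw_pair_pos w1) as P1; pose proof (cw_pair_pos w2) as P2.
  destruct (cw_pair w1) as [a1 c1] eqn:E1, (cw_pair w2) as [a2 c2] eqn:E2; simpl in *.
  destruct b1, b2; injection E as Ea Ec; try lia;
    f_equal; apply IH; [lia | rewrite E2; f_equal; lia | lia | rewrite E2; f_equal; lia].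
Qed.

Fixpoint bool_words (r : nat) : list (list bool) :=
  match r with
  | O => [[]]
  | S r' => map (cons true) (bool_words r') ++ map (cons false) (bool_words r')
  end.

Lemma length_bool_words r : length (bool_words r) = 2 ^ r.
Proof.
  induction r as [|r IH]; simpl; auto.
  rewrite length_app, !length_map, IH. lia.
Qed.

Lemma in_bool_words_length r w : In w (bool_words r) -> length w = r.
Proof.
  revert w; induction r as [|r IH]; simpl; intros w H.
  - destruct H as [<-|[]]; reflexivity.
  - apply in_app_or in H.
    destruct H as [H|H]; apply in_map_iff in H as [w' [<- H]]; simpl; f_equal; auto.
Qed.

Lemma NoDup_bool_words r : NoDup (bool_words r).
Proof.
  induction r as [|r IH]; simpl.
  - constructor; [intros [] | constructor].
  - apply NoDup_app; try (apply Injective_map_NoDup; [intros x y H; injection H|]; auto).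
    intros x H1 H2. apply in_map_iff in H1 as [? [<- _]].
    apply in_map_iff in H2 as [? [E _]]. discriminate.
Qed.

Section CalkinWilfWalk.
Variables (G : group) (n k : nat) (t : list G) (g : G).
Hypothesis Ht : generating_tuple n t.

Definition cw_vertex (w : list bool) : list G :=
  slots G k t (gpow G g (fst (cw_pair w))) (gpow G g (snd (cw_pair w))).

Lemma within_cw_vertex w : within G (n + 2 + k) (length w) (cw_vertex []) (cw_vertex w).
Proof.
  induction w as [|b w IH]; [apply within_refl|].
  eapply within_snoc; [exact IH|].
  unfold cw_vertex; simpl. destruct (cw_pair w) as [a c]. simpl.
  destruct b; simpl; rewrite gpowD; [apply edge_slots_xy | apply edge_slots_yx]; exact Ht.
Qed.

Hypothesis Hg : infinite_order g.

Lemma cw_vertex_inj w1 w2 :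
  length w1 = length w2 -> cw_vertex w1 = cw_vertex w2 -> w1 = w2.
Proof.
  intros HL E. apply cw_pair_inj; [exact HL|].
  apply slots_inj in E as [Ea Ec].
  apply gpow_inj in Ea; [|exact Hg]. apply gpow_inj in Ec; [|exact Hg].
  destruct (cw_pair w1), (cw_pair w2); simpl in *; subst; reflexivity.
Qed.

Lemma ball_cw_vertex r : exists l : list (list G),
  NoDup l /\ (forall v, In v l -> within G (n + 2 + k) r (cw_vertex []) v) /\
  length l = 2 ^ r.
Proof.
  exists (map cw_vertex (bool_words r)). split; [|split].
  - apply NoDup_map_NoDup_ForallPairs; [|apply NoDup_bool_words].
    intros w1 w2 H1 H2. apply cw_vertex_inj.
    rewrite (in_bool_words_length _ _ H1), (in_bool_words_length _ _ H2); reflexivity.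
  - intros v Hv. apply in_map_iff in Hv as [w [<- Hw]].
    rewrite <- (in_bool_words_length _ _ Hw). apply within_cw_vertex.
  - rewrite length_map. apply length_bool_words.
Qed.

End CalkinWilfWalk.

Theorem lemma3p8 (G : group) :
  finitely_generated G ->
  (exists g : G, @infinite_order G g) ->
  forall (n : nat) (S : list G), generating_tuple n S ->
  forall m : nat, n + 2 <= m ->
  pr_component_exp_growth m S.
Proof.
  (* Finite generation is already witnessed by S. *)
  intros _ [g Hg] n S HS m Hm.
  replace m with (n + 2 + (m - n - 2)) by lia.
  set (k := m - n - 2).
  exists (cw_vertex G k S g []). rewrite (pad_slots k HS). split; [|split].
  - apply slots_generating; exact HS.
  - apply connected_slots; exact HS.
  - exists 2%R. split; [lra|]. exists 0. intros r _.
    destruct (ball_cw_vertex k HS Hg r) as [l [Hl [Hball Hlen]]].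
    exists l. split; [exact Hl | split; [exact Hball|]].
    rewrite Hlen, pow_INR. apply Rle_refl.
Qed.
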